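(* Suppose that $$\forall\,\varepsilon>0\;\exists\,\delta>0\ \text{such that}\ j(\varphi,\psi)\le\varepsilon\ \ \forall\,(\varphi,\psi)\in U_+\ \text{with}\ \|\varphi\|_0\le\delta .$$ If $q(0)<0$, then the zero equilibrium of $w'(t)=q(v(t))w(t)$, $v'(t)=j(w_t,v_t)-\mu v(t)$ on $X_+$ is globally asymptotically stable (in the $C$- and $C^1$-norms).
   Context: Let $h>0$, $R_-<0$, $I=(R_-,\infty)$, $q:I\to\mathbb{R}$, $\mu>0$, $U=C^1([-h,0],\mathbb{R})\times C^1([-h,0],I)$, $j:U\to\mathbb{R}$, $U_+=C^1([-h,0],\mathbb{R}_+^2)$, $\|\cdot\|_0$ the sup-norm, $\|\phi\|_1=\|\phi\|_0+\|\phi'\|_0$; $x_t(s)=x(t+s)$. Define $F(\varphi,\psi)=(q(\psi(0))\varphi(0),\,j(\varphi,\psi)-\mu\psi(0))$ and $X_+=\{\phi\in C^1([-h,0],\mathbb{R}_+^2):\phi'(0)=F(\phi)\}\neq\emptyset$. Assume: $j$ is $C^1$ on $U$ with each derivative extending to a linear map on $C([-h,0],\mathbb{R}^2)$ depending continuously on $(\phi,\chi)$; for every bounded $B\subset U_+$ there is $L_B$ with $|j(\phi)-j(\chi)|\le L_B\|\phi-\chi\|_0$ on $B$; $j\ge0$ on $U_+$; $j(B_1\times B_2)$ is bounded whenever $B_1\times B_2\subset U_+$ with $B_1$ bounded; $q$ is bounded and $C^1$; and $q(s)<0$ for all $s>0$. Solutions from $X_+$ exist globally and define a continuous semiflow on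 $X_+$. Globally asymptotically stable means stable and attracting every solution from $X_+$. *)

From Stdlib Require Import Reals Lra.
From Coquelicot Require Import Coquelicot.
Open Scope R_scope.

(* Elements of C^1([-h,0],R) are represented by functions R -> R that are C^1
   on the whole real line (every C^1 function on [-h,0] has such an extension);
   only their values on [-h,0] ever matter (see locality of j below). *)
Definition C1 (f : R -> R) : Prop :=
  (forall t, ex_derive f t) /\ (forall t, continuous (Derive f) t).

Definition cont (f : R -> R) : Prop := forall t, continuous f t.

Definition sup0 (h : R) (f : R -> R) : R :=
  real (Lub_Rbar (fun y => exists s, -h <= s <= 0 /\ y = Rabs (f s))).

Definition nrm0 (h : R) (w v : R -> R) : R := Rmax (sup0 h w) (sup0 h v).

Definition nrm1 (h : R) (w v : R -> R) : R :=
  nrm0 h w v + nrm0 h (Derive w) (Derive v).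

Definition fsub (f g : R -> R) : R -> R := fun s => f s - g s.
Definition fadd (f g : R -> R) : R -> R := fun s => f s + g s.

Definition inU (h Rm : R) (w v : R -> R) : Prop :=
  C1 w /\ C1 v /\ forall s, -h <= s <= 0 -> Rm < v s.

Definition inUplus (h : R) (w v : R -> R) : Prop :=
  C1 w /\ C1 v /\ forall s, -h <= s <= 0 -> 0 <= w s /\ 0 <= v s.

Definition inXplus (h : R) (q : R -> R) (mu : R)
    (j : (R -> R) -> (R -> R) -> R) (w v : R -> R) : Prop :=
  inUplus h w v /\ Derive w 0 = q (v 0) * w 0 /\ Derive v 0 = j w v - mu * v 0.

Definition shift (x : R -> R) (t : R) : R -> R := fun s => x (t + s).

(* (w,v) is a (global) solution on [-h,oo) of
     w'(t) = q(v(t)) w(t),  v'(t) = j(w_t,v_t) - mu v(t)   (t >= 0),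
   with x_t in U for all t >= 0; x is represented by a C^1 function on R
   (its values on (-oo,-h) are irrelevant). *)
Definition is_solution (h Rm : R) (q : R -> R) (mu : R)
    (j : (R -> R) -> (R -> R) -> R) (w v : R -> R) : Prop :=
  C1 w /\ C1 v /\
  (forall t, 0 <= t -> inU h Rm (shift w t) (shift v t)) /\
  (forall t, 0 <= t ->
     Derive w t = q (v t) * w t /\
     Derive v t = j (shift w t) (shift v t) - mu * v t).

Definition standing (h Rm : R) (q : R -> R) (mu : R)
    (j : (R -> R) -> (R -> R) -> R) : Prop :=
  0 < h /\ Rm < 0 /\ 0 < mu /\
  (* j is a function on U: it only depends on values on [-h,0] *)
  (forall w1 v1 w2 v2, inU h Rm w1 v1 -> inU h Rm w2 v2 ->
     (forall s, -h <= s <= 0 -> w1 s = w2 s /\ v1 s = v2 s) ->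
     j w1 v1 = j w2 v2) /\
  (* j is C^1 on U (Frechet, w.r.t. ||.||_1), with derivatives extending to
     linear maps on C([-h,0],R^2) depending continuously on (phi,chi) *)
  (exists Dj : (R -> R) -> (R -> R) -> (R -> R) -> (R -> R) -> R,
     (forall w v, inU h Rm w v ->
        forall a b c1 c2 d1 d2, cont c1 -> cont c2 -> cont d1 -> cont d2 ->
          Dj w v (fun s => a * c1 s + b * d1 s) (fun s => a * c2 s + b * d2 s)
          = a * Dj w v c1 c2 + b * Dj w v d1 d2) /\
     (* it is a map on C([-h,0],R^2): depends only on values on [-h,0] *)
     (forall w v, inU h Rm w v ->
        forall c1 c2 d1 d2, cont c1 -> cont c2 -> cont d1 -> cont d2 ->
          (forall s, -h <= s <= 0 -> c1 s = d1 s /\ c2 s = d2 s) ->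
          Dj w v c1 c2 = Dj w v d1 d2) /\
     (forall w v, inU h Rm w v ->
        forall eps, 0 < eps -> exists del, 0 < del /\
          forall c1 c2, C1 c1 -> C1 c2 -> nrm1 h c1 c2 <= del ->
            inU h Rm (fadd w c1) (fadd v c2) ->
            Rabs (j (fadd w c1) (fadd v c2) - j w v - Dj w v c1 c2)
              <= eps * nrm1 h c1 c2) /\
     (forall w v, inU h Rm w v ->
        forall eps, 0 < eps -> exists del, 0 < del /\
          forall w' v', inU h Rm w' v' -> nrm1 h (fsub w' w) (fsub v' v) <= del ->
            forall c1 c2, C1 c1 -> C1 c2 ->
              Rabs (Dj w' v' c1 c2 - Dj w v c1 c2) <= eps * nrm1 h c1 c2) /\
     (forall w v c1 c2, inU h Rm w v -> cont c1 -> cont c2 ->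
        forall eps, 0 < eps -> exists del, 0 < del /\
          forall w' v' c1' c2', inU h Rm w' v' -> cont c1' -> cont c2' ->
            nrm1 h (fsub w' w) (fsub v' v) <= del ->
            nrm0 h (fsub c1' c1) (fsub c2' c2) <= del ->
            Rabs (Dj w' v' c1' c2' - Dj w v c1 c2) <= eps)) /\
  (forall B : (R -> R) -> (R -> R) -> Prop,
     (forall w v, B w v -> inUplus h w v) ->
     (exists r, forall w v, B w v -> nrm1 h w v <= r) ->
     exists L, forall w1 v1 w2 v2, B w1 v1 -> B w2 v2 ->
       Rabs (j w1 v1 - j w2 v2) <= L * nrm0 h (fsub w1 w2) (fsub v1 v2)) /\
  (forall w v, inUplus h w v -> 0 <= j w v) /\
  (forall B1 B2 : (R -> R) -> Prop,
     (forall w v, B1 w -> B2 v -> inUplus h w v) ->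
     (exists r, forall w, B1 w -> sup0 h w + sup0 h (Derive w) <= r) ->
     exists M, forall w v, B1 w -> B2 v -> Rabs (j w v) <= M) /\
  (exists M, forall s, Rm < s -> Rabs (q s) <= M) /\
  (forall s, Rm < s -> ex_derive q s /\ continuous (Derive q) s) /\
  (forall s, 0 < s -> q s < 0).

From Pilot Require Import Defs.
From Stdlib Require Import Reals Lra FunctionalExtensionality Classical.
From Coquelicot Require Import Coquelicot.
(* Re-imported so that [Defs.C1] shadows Coquelicot's [C1]. *)
From Pilot Require Import Defs.
Open Scope R_scope.

(* Both components stay nonnegative along solutions from X_+: w solves the linear
   equation w' = q(v) w, and at a first time where v would turn negative, lifting
   the history of v by the small constant m = -min v puts it into U_+, where j >= 0;
   since j is C^1 the lift changes j by at most L m, so v' >= -L m - mu v on a short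
   interval, which cannot drive v from 0 down to -m.
   Hence q(v) <= 0, w is nonincreasing, and for small initial data the smallness of
   j for small w together with v' <= j - mu v keeps the state small (stability).
   For attractivity, j is bounded along the orbit, hence so is v; q is negative on
   that bounded range, so w decays exponentially, after which j and then v become
   small, and the equations bound the derivatives. *)

Lemma MVT_interval (f d : R -> R) a b : a <= b ->
  (forall x, a <= x <= b -> is_derive f x (d x)) ->
  exists c, a <= c <= b /\ f b - f a = d c * (b - a).
Proof.
  intros Hab Hd.
  destruct (MVT_gen f a b d) as [c [Hc Heq]].
  - intros x Hx. rewrite Rmin_left, Rmax_right in Hx by lra. apply Hd; lra.
  - intros x Hx. rewrite Rmin_left, Rmax_right in Hx by lra.
    apply continuity_pt_filterlim, (@ex_derive_continuous R_AbsRing R_NormedModule).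
    eexists; apply Hd; lra.
  - rewrite Rmin_left, Rmax_right in Hc by lra. eauto.
Qed.

Lemma MVT_le (f d : R -> R) a b K : a <= b ->
  (forall x, a <= x <= b -> is_derive f x (d x)) ->
  (forall x, a <= x <= b -> d x <= K) -> f b - f a <= K * (b - a).
Proof.
  intros Hab Hd HK. destruct (MVT_interval f d a b Hab Hd) as [c [Hc ->]].
  apply Rmult_le_compat_r; [lra | auto].
Qed.

Lemma MVT_abs_le (f d : R -> R) a b K : a <= b ->
  (forall x, a <= x <= b -> is_derive f x (d x)) ->
  (forall x, a <= x <= b -> Rabs (d x) <= K) -> Rabs (f b - f a) <= K * (b - a).
Proof.
  intros Hab Hd HK. destruct (MVT_interval f d a b Hab Hd) as [c [Hc ->]].
  rewrite Rabs_mult, (Rabs_pos_eq (b - a)) by lra.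
  apply Rmult_le_compat_r; [lra | auto].
Qed.

Lemma exp_le_exp x y : x <= y -> exp x <= exp y.
Proof.
  intros [Hlt | ->]; [apply Rlt_le, exp_increasing, Hlt | apply Rle_refl].
Qed.

Lemma linear_comparison (f : R -> R) a b J c : 0 < c -> a <= b ->
  (forall t, a <= t <= b -> ex_derive f t) ->
  (forall t, a <= t <= b -> Derive f t <= J - c * f t) ->
  f b <= J / c + (f a - J / c) * exp (- c * (b - a)).
Proof.
  intros Hc Hab Hf Hd.
  set (g := fun t => (f t - J / c) * exp (c * t)).
  assert (Hg : g b - g a <= 0 * (b - a)).
  { apply (MVT_le g (fun t => (Derive f t + c * f t - J) * exp (c * t))); auto.
    - intros x Hx. unfold g.
      auto_derive; change (fun y : R => f y) with f; [apply Hf; lra | field; lra].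
    - intros x Hx. pose proof (Hd x Hx). pose proof (exp_pos (c * x)). nra. }
  unfold g in Hg. pose proof (exp_pos (c * b)).
  replace (- c * (b - a)) with (c * a + - (c * b)) by ring.
  rewrite exp_plus, exp_Ropp.
  apply (Rmult_le_reg_r (exp (c * b))); auto.
  replace ((J / c + (f a - J / c) * (exp (c * a) * / exp (c * b))) * exp (c * b))
    with (J / c * exp (c * b) + (f a - J / c) * exp (c * a)) by (field; lra).
  lra.
Qed.

Lemma linear_comparison_max (f : R -> R) a b J c : 0 < c -> a <= b ->
  (forall t, a <= t <= b -> ex_derive f t) ->
  (forall t, a <= t <= b -> Derive f t <= J - c * f t) ->
  f b <= Rmax (f a) (J / c).
Proof.
  intros Hc Hab Hf Hd. pose proof (linear_comparison f a b J c Hc Hab Hf Hd) as Hcmp.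
  assert (Hexp : 0 < exp (- c * (b - a)) <= 1).
  { split; [apply exp_pos | rewrite <- exp_0; apply exp_le_exp; nra]. }
  destruct (Rle_or_lt (f a) (J / c)).
  - rewrite Rmax_right by lra. nra.
  - rewrite Rmax_left by lra. nra.
Qed.

Lemma linear_comparison_lower (v : R -> R) a b K c : 0 < c -> a <= b -> 0 <= K ->
  0 <= v a -> (forall t, a <= t <= b -> ex_derive v t) ->
  (forall t, a <= t <= b -> - K - c * v t <= Derive v t) -> - v b <= K * (b - a).
Proof.
  intros Hc Hab HK Hva Hv Hd.
  pose proof (linear_comparison (fun t => - v t) a b K c Hc Hab) as Hcmp.
  assert (Hexp : 1 - c * (b - a) <= exp (- c * (b - a))).
  { pose proof (exp_ineq1_le (- c * (b - a))). lra. }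
  assert (Hcmp' : - v b <= K / c + (- v a - K / c) * exp (- c * (b - a))).
  { apply Hcmp.
    - intros t Ht. auto_derive. apply Hv, Ht.
    - intros t Ht. rewrite Derive_opp. specialize (Hd t Ht). lra. }
  pose proof (exp_pos (- c * (b - a))).
  replace (K * (b - a)) with (K / c * (c * (b - a))) by (field; lra).
  assert (0 <= K / c) by (apply Rdiv_le_0_compat; lra).
  nra.
Qed.

Lemma exp_decay_eventually_le K c e : 0 < c -> 0 < e ->
  exists S, forall s, S <= s -> K * exp (- c * s) <= e.
Proof.
  intros Hc He. exists (Rabs K / (c * e)). intros s Hs.
  assert (HK : Rabs K <= c * e * s).
  { apply (Rmult_le_compat_l (c * e)) in Hs; [| nra].
    replace (c * e * (Rabs K / (c * e))) with (Rabs K) in Hs by (field; lra). lra. }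
  pose proof (exp_ineq1_le (c * s)). pose proof (exp_pos (c * s)).
  replace (- c * s) with (- (c * s)) by ring. rewrite exp_Ropp.
  apply (Rmult_le_reg_r (exp (c * s))); auto.
  rewrite Rmult_assoc, Rinv_l, Rmult_1_r by lra.
  pose proof (Rle_abs K). pose proof (Rabs_pos K). nra.
Qed.

Lemma continuous_lt_near (f : R -> R) x c : continuous f x -> f x < c ->
  exists d, 0 < d /\ forall y, Rabs (y - x) < d -> f y < c.
Proof.
  intros Hf Hx.
  assert (Hc : 0 < c - f x) by lra.
  destruct (Hf (fun y => y < c)) as [d Hd].
  { exists (mkposreal _ Hc). intros y Hy. apply Rabs_lt_between' in Hy. simpl in Hy. lra. }
  exists d. split; [apply cond_pos | intros y Hy; apply Hd, Hy].
Qed.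

Lemma first_exit_time (v : R -> R) t1 : (forall t, continuous v t) ->
  0 <= v 0 -> 0 <= t1 -> v t1 < 0 ->
  exists T, 0 <= T /\ (forall t, 0 <= t <= T -> 0 <= v t) /\
    forall eta, 0 < eta -> exists t, T < t <= T + eta /\ v t < 0.
Proof.
  intros Hv Hv0 Ht1 Hvt1.
  set (S := fun t => 0 <= t /\ forall s, 0 <= s <= t -> 0 <= v s).
  assert (HS0 : S 0).
  { split; [lra |]. intros s Hs. replace s with 0 by lra. exact Hv0. }
  assert (Hub : is_upper_bound S t1).
  { intros t [Ht HvS]. destruct (Rle_or_lt t t1); auto. specialize (HvS t1). lra. }
  destruct (completeness S (ex_intro _ t1 Hub) (ex_intro _ 0 HS0)) as [T [HTub HTlub]].
  assert (HT0 : 0 <= T) by (apply HTub; exact HS0).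
  assert (Hbefore : forall s, 0 <= s < T -> 0 <= v s).
  { intros s Hs. apply NNPP. intros Hneg.
    assert (Hs_ub : is_upper_bound S s).
    { intros t [Ht HvS]. destruct (Rle_or_lt t s); auto. exfalso. apply Hneg, HvS. lra. }
    specialize (HTlub s Hs_ub). lra. }
  assert (HvT : 0 <= v T).
  { apply Rnot_lt_le. intros HvT.
    destruct (continuous_lt_near v T 0 (Hv T) HvT) as [d [Hd Hnear]].
    destruct (Rle_or_lt T (d / 2)) as [Hsmall | Hbig].
    - assert (Hdist : Rabs (0 - T) < d) by (rewrite Rabs_left1; lra).
      specialize (Hnear 0 Hdist). lra.
    - assert (Hdist : Rabs (T - d / 2 - T) < d) by (rewrite Rabs_left; lra).
      specialize (Hnear _ Hdist). specialize (Hbefore (T - d / 2)). lra. }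
  exists T. split; [exact HT0 | split].
  - intros t Ht. destruct (Rle_lt_or_eq_dec t T (proj2 Ht)) as [Hlt | ->];
      [apply Hbefore; lra | exact HvT].
  - intros eta Heta. apply NNPP. intros Hnone.
    assert (HS : S (T + eta)).
    { split; [lra |]. intros s Hs. destruct (Rle_or_lt s T) as [Hle | Hgt].
      - destruct (Rle_lt_or_eq_dec s T Hle) as [Hlt | ->]; [apply Hbefore; lra | exact HvT].
      - apply Rnot_lt_le. intros Hvs. apply Hnone. exists s. split; [lra | exact Hvs]. }
    specialize (HTub _ HS). lra.
Qed.

Lemma uniform_continuity_interval (f : R -> R) a b eps : (forall t, continuous f t) -> 0 < eps ->
  exists d, 0 < d /\ forall x y, a <= x <= b -> a <= y <= b ->
    Rabs (x - y) < d -> Rabs (f x - f y) < eps.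
Proof.
  intros Hf Heps.
  destruct (Heine f (fun c => a <= c <= b) (compact_P3 a b)) with (eps := mkposreal _ Heps)
    as [d Hd].
  - intros x _. apply continuity_pt_filterlim, Hf.
  - exists d. split; [apply cond_pos | intros; apply (Hd x y); auto].
Qed.

Lemma linear_ode_nonneg (w a : R -> R) (Q : R) : (forall t, ex_derive w t) ->
  (forall t, 0 <= t -> Derive w t = a t * w t) -> (forall t, 0 <= t -> Rabs (a t) <= Q) ->
  0 <= w 0 -> forall t, 0 <= t -> 0 <= w t.
Proof.
  intros Hw Hode Ha Hw0 t1 Ht1. apply Rnot_lt_le. intros Hneg.
  destruct (IVT_gen w 0 t1 0) as [x [Hx Hwx]].
  - intros t. apply continuity_pt_filterlim, (@ex_derive_continuous R_AbsRing R_NormedModule), Hw.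
  - split; [apply Rle_trans with (w t1); [apply Rmin_r | lra]
           | apply Rle_trans with (w 0); [lra | apply Rmax_l]].
  - rewrite Rmin_left, Rmax_right in Hx by lra.
    (* [w^2 e^{-2Qt}] is nonincreasing, so it stays 0 after the zero [x] *)
    set (g := fun t => w t ^ 2 * exp (- (2 * Q) * t)).
    assert (Hg : g t1 - g x <= 0 * (t1 - x)).
    { apply (MVT_le g (fun t => 2 * (w t ^ 2 * exp (- (2 * Q) * t)) * (a t - Q))); [lra | |].
      - intros y Hy. unfold g. auto_derive; change (fun z : R => w z) with w; [apply Hw |].
        rewrite (Hode y) by lra. ring.
      - intros y Hy. pose proof (Ha y ltac:(lra)) as Hay. apply Rabs_le_between in Hay.
        pose proof (exp_pos (- (2 * Q) * y)). pose proof (pow2_ge_0 (w y)).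
        assert (0 <= w y ^ 2 * exp (- (2 * Q) * y)) by (apply Rmult_le_pos; lra). nra. }
    unfold g in Hg. rewrite Hwx in Hg. pose proof (exp_pos (- (2 * Q) * t1)).
    assert (0 < w t1 ^ 2) by nra. nra.
Qed.

Lemma continuous_of_C1 (f : R -> R) : C1 f -> forall t, continuous f t.
Proof. intros [Hf _] t. apply (@ex_derive_continuous R_AbsRing R_NormedModule), Hf. Qed.

Lemma Derive_const_fun c : Derive (fun _ : R => c) = fun _ => 0.
Proof. apply functional_extensionality. intros. apply Derive_const. Qed.

Lemma C1_const c : C1 (fun _ => c).
Proof.
  split; [intros; auto_derive; auto |].
  rewrite Derive_const_fun. intros. apply continuous_const.
Qed.

Lemma Derive_fadd_const (f : R -> R) c : C1 f -> Derive (fadd f (fun _ => c)) = Derive f.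
Proof.
  intros [Hf _]. apply functional_extensionality. intros x. apply is_derive_unique.
  unfold fadd. auto_derive; change (fun y : R => f y) with f; [apply Hf | ring].
Qed.

Lemma C1_fadd_const (f : R -> R) c : C1 f -> C1 (fadd f (fun _ => c)).
Proof.
  intros Hf. split.
  - intros x. unfold fadd. auto_derive. apply Hf.
  - rewrite Derive_fadd_const by exact Hf. apply Hf.
Qed.

Lemma Derive_fsub (f g : R -> R) : C1 f -> C1 g ->
  Derive (fsub f g) = fun x => Derive f x - Derive g x.
Proof.
  intros [Hf _] [Hg _]. apply functional_extensionality. intros x. apply is_derive_unique.
  unfold fsub. auto_derive; change (fun y : R => f y) with f; change (fun y : R => g y) with g;
    [split; auto | ring].
Qed.

Lemma Derive_shift (f : R -> R) t : C1 f -> Derive (shift f t) = shift (Derive f) t.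
Proof.
  intros [Hf _]. apply functional_extensionality. intros s. apply is_derive_unique.
  unfold shift. auto_derive; change (fun y : R => f y) with f; [apply Hf | ring].
Qed.

Lemma C1_shift (f : R -> R) t : C1 f -> C1 (shift f t).
Proof.
  intros Hf. split.
  - intros s. unfold shift. auto_derive. apply Hf.
  - rewrite Derive_shift by exact Hf. intros s. unfold shift.
    apply (continuous_comp (fun s => t + s) (Derive f)); [| apply Hf].
    apply (@ex_derive_continuous R_AbsRing R_NormedModule). auto_derive. auto.
Qed.

Lemma sup0_le h (f : R -> R) B : 0 <= h ->
  (forall s, -h <= s <= 0 -> Rabs (f s) <= B) -> sup0 h f <= B.
Proof.
  intros Hh HB. unfold sup0.
  destruct (Lub_Rbar_correct (fun y => exists s, -h <= s <= 0 /\ y = Rabs (f s))) as [Hub Hlub].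
  assert (Rbar_le (Lub_Rbar (fun y => exists s, -h <= s <= 0 /\ y = Rabs (f s))) B).
  { apply Hlub. intros y [s [Hs ->]]. apply HB, Hs. }
  assert (Rbar_le (Rabs (f 0)) (Lub_Rbar (fun y => exists s, -h <= s <= 0 /\ y = Rabs (f s)))).
  { apply Hub. exists 0. split; [lra | reflexivity]. }
  destruct (Lub_Rbar _); simpl in *; tauto.
Qed.

Lemma sup0_ge0 h (f : R -> R) : 0 <= h -> 0 <= sup0 h f.
Proof.
  intros Hh. unfold sup0.
  destruct (Lub_Rbar_correct (fun y => exists s, -h <= s <= 0 /\ y = Rabs (f s))) as [Hub _].
  assert (Rbar_le (Rabs (f 0)) (Lub_Rbar (fun y => exists s, -h <= s <= 0 /\ y = Rabs (f s)))).
  { apply Hub. exists 0. split; [lra | reflexivity]. }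
  pose proof (Rabs_pos (f 0)).
  destruct (Lub_Rbar _); simpl in *; lra || tauto.
Qed.

Lemma Rabs_le_sup0 h (f : R -> R) : 0 <= h -> (forall s, -h <= s <= 0 -> continuous f s) ->
  forall s, -h <= s <= 0 -> Rabs (f s) <= sup0 h f.
Proof.
  intros Hh Hf s Hs.
  (* the Lub is finite because [|f|] attains a maximum on [-h,0] *)
  destruct (continuity_ab_maj (fun s => Rabs (f s)) (-h) 0) as [M [HM _]]; [lra | |].
  { intros c Hc. apply continuity_pt_filterlim.
    apply (continuous_comp f Rabs); [apply Hf, Hc | apply continuous_Rabs]. }
  unfold sup0.
  destruct (Lub_Rbar_correct (fun y => exists s, -h <= s <= 0 /\ y = Rabs (f s))) as [Hub Hlub].
  assert (Rbar_le (Lub_Rbar (fun y => exists s, -h <= s <= 0 /\ y = Rabs (f s))) (Rabs (f M))).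
  { apply Hlub. intros y [s' [Hs' ->]]. apply HM, Hs'. }
  assert (Rbar_le (Rabs (f s)) (Lub_Rbar (fun y => exists s, -h <= s <= 0 /\ y = Rabs (f s)))).
  { apply Hub. exists s. split; [exact Hs | reflexivity]. }
  destruct (Lub_Rbar _); simpl in *; tauto.
Qed.

Lemma C1_le_sup0 h (f : R -> R) : 0 <= h -> C1 f -> forall s, -h <= s <= 0 -> f s <= sup0 h f.
Proof.
  intros Hh Hf s Hs. apply Rle_trans with (Rabs (f s)); [apply Rle_abs |].
  apply Rabs_le_sup0; [exact Hh | intros; apply continuous_of_C1, Hf | exact Hs].
Qed.

Lemma sup0_const h c : 0 <= h -> sup0 h (fun _ => c) = Rabs c.
Proof.
  intros Hh. apply Rle_antisym.
  - apply sup0_le; [exact Hh | intros; lra].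
  - apply (Rabs_le_sup0 h (fun _ => c) Hh (fun s _ => continuous_const c s) 0). lra.
Qed.

Lemma nrm0_le h (w v : R -> R) B : 0 <= h ->
  (forall s, -h <= s <= 0 -> Rabs (w s) <= B /\ Rabs (v s) <= B) -> nrm0 h w v <= B.
Proof.
  intros Hh HB. apply Rmax_lub; apply sup0_le; auto; intros s Hs; apply HB, Hs.
Qed.

Lemma nrm1_le h (w v : R -> R) B0 B1 : 0 <= h ->
  (forall s, -h <= s <= 0 -> Rabs (w s) <= B0 /\ Rabs (v s) <= B0 /\
     Rabs (Derive w s) <= B1 /\ Rabs (Derive v s) <= B1) ->
  nrm1 h w v <= B0 + B1.
Proof.
  intros Hh HB. apply Rplus_le_compat; apply nrm0_le; auto; intros s Hs; apply HB in Hs; tauto.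
Qed.

Lemma nrm0_le_nrm1 h (w v : R -> R) : 0 <= h -> nrm0 h w v <= nrm1 h w v.
Proof.
  intros Hh. unfold nrm1, nrm0.
  pose proof (Rle_trans _ _ _ (sup0_ge0 h (Derive w) Hh) (Rmax_l _ (sup0 h (Derive v)))). lra.
Qed.

Lemma Rabs_le_nrm1 h (w v : R -> R) : 0 <= h -> C1 w -> C1 v -> forall s, -h <= s <= 0 ->
  Rabs (w s) <= nrm1 h w v /\ Rabs (v s) <= nrm1 h w v /\
  Rabs (Derive w s) <= nrm1 h w v /\ Rabs (Derive v s) <= nrm1 h w v.
Proof.
  intros Hh Cw Cv s Hs. unfold nrm1, nrm0.
  pose proof (sup0_ge0 h w Hh). pose proof (sup0_ge0 h (Derive w) Hh).
  pose proof (Rabs_le_sup0 h w Hh (fun s _ => continuous_of_C1 w Cw s) s Hs).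
  pose proof (Rabs_le_sup0 h v Hh (fun s _ => continuous_of_C1 v Cv s) s Hs).
  pose proof (Rabs_le_sup0 h (Derive w) Hh (fun s _ => proj2 Cw s) s Hs).
  pose proof (Rabs_le_sup0 h (Derive v) Hh (fun s _ => proj2 Cv s) s Hs).
  pose proof (Rmax_l (sup0 h w) (sup0 h v)). pose proof (Rmax_r (sup0 h w) (sup0 h v)).
  pose proof (Rmax_l (sup0 h (Derive w)) (sup0 h (Derive v))).
  pose proof (Rmax_r (sup0 h (Derive w)) (sup0 h (Derive v))).
  repeat split; lra.
Qed.

Lemma nrm1_const0 h c : 0 <= h -> nrm1 h (fun _ => 0) (fun _ => c) = Rabs c.
Proof.
  intros Hh. unfold nrm1, nrm0. rewrite !Derive_const_fun, !sup0_const, Rabs_R0 by exact Hh.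
  rewrite Rmax_right, Rmax_left by (apply Rabs_pos || lra). ring.
Qed.

Lemma shift_C1_close h (f : R -> R) t0 r : 0 <= h -> C1 f -> 0 < r -> exists eta, 0 < eta /\
  forall t, t0 <= t <= t0 + eta -> forall x, -h <= x <= 0 ->
    Rabs (f (t + x) - f (t0 + x)) <= r /\
    Rabs (Derive f (t + x) - Derive f (t0 + x)) <= r.
Proof.
  intros Hh Hf Hr.
  destruct (uniform_continuity_interval f (t0 - h) (t0 + 1) r (continuous_of_C1 f Hf) Hr)
    as [d0 [Hd0 Hc0]].
  destruct (uniform_continuity_interval (Derive f) (t0 - h) (t0 + 1) r (proj2 Hf) Hr)
    as [d1 [Hd1 Hc1]].
  exists (Rmin 1 (Rmin d0 d1) / 2).
  assert (0 < Rmin 1 (Rmin d0 d1)) by (repeat apply Rmin_glb_lt; lra).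
  pose proof (Rmin_l 1 (Rmin d0 d1)). pose proof (Rmin_r 1 (Rmin d0 d1)).
  pose proof (Rmin_l d0 d1). pose proof (Rmin_r d0 d1).
  split; [lra |]. intros t Ht x Hx.
  assert (Hdist : Rabs (t + x - (t0 + x)) <= Rmin 1 (Rmin d0 d1) / 2)
    by (rewrite Rabs_pos_eq; lra).
  split; apply Rlt_le; [apply Hc0 | apply Hc1]; lra.
Qed.

Lemma is_derive_of_remainder (phi : R -> R) c D :
  (forall eps, 0 < eps -> exists del, 0 < del /\ forall tau, Rabs tau <= del ->
     Rabs (phi (c + tau) - phi c - tau * D) <= eps * Rabs tau) ->
  is_derive phi c D.
Proof.
  intros Hrem. apply is_derive_Reals. intros eps Heps.
  destruct (Hrem (eps / 2)) as [d [Hd Hle]]; [lra |].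
  exists (mkposreal d Hd). intros tau Htau0 Htau. simpl in Htau.
  specialize (Hle tau ltac:(lra)). apply Rabs_pos_lt in Htau0 as Habs.
  replace ((phi (c + tau) - phi c) / tau - D)
    with ((phi (c + tau) - phi c - tau * D) / tau) by (field; exact Htau0).
  rewrite Rabs_div by exact Htau0.
  apply (Rmult_lt_reg_r (Rabs tau)); [exact Habs |].
  unfold Rdiv. rewrite Rmult_assoc, Rinv_l, Rmult_1_r by lra. nra.
Qed.

Section ConstantDirection.

Variables (h Rm : R) (j : (R -> R) -> (R -> R) -> R)
  (Dj : (R -> R) -> (R -> R) -> (R -> R) -> (R -> R) -> R).
Hypothesis h_ge0 : 0 <= h.
Hypothesis Dj_linear : forall w v, inU h Rm w v ->
  forall a b c1 c2 d1 d2, cont c1 -> cont c2 -> cont d1 -> cont d2 ->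
    Dj w v (fun s => a * c1 s + b * d1 s) (fun s => a * c2 s + b * d2 s)
    = a * Dj w v c1 c2 + b * Dj w v d1 d2.
Hypothesis Dj_frechet : forall w v, inU h Rm w v ->
  forall eps, 0 < eps -> exists del, 0 < del /\
    forall c1 c2, C1 c1 -> C1 c2 -> nrm1 h c1 c2 <= del ->
      inU h Rm (fadd w c1) (fadd v c2) ->
      Rabs (j (fadd w c1) (fadd v c2) - j w v - Dj w v c1 c2) <= eps * nrm1 h c1 c2.
Hypothesis Dj_continuous : forall w v, inU h Rm w v ->
  forall eps, 0 < eps -> exists del, 0 < del /\
    forall w' v', inU h Rm w' v' -> nrm1 h (fsub w' w) (fsub v' v) <= del ->
      forall c1 c2, C1 c1 -> C1 c2 ->
        Rabs (Dj w' v' c1 c2 - Dj w v c1 c2) <= eps * nrm1 h c1 c2.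

Lemma Dj_const_dir_scale w v tau : inU h Rm w v ->
  Dj w v (fun _ => 0) (fun _ => tau) = tau * Dj w v (fun _ => 0) (fun _ => 1).
Proof.
  intros HU. assert (Hc : forall k, cont (fun _ : R => k)) by (intros k t; apply continuous_const).
  pose proof (Dj_linear w v HU tau 0 (fun _ => 0) (fun _ => 1) (fun _ => 0) (fun _ => 0)
    (Hc 0) (Hc 1) (Hc 0) (Hc 0)) as Hlin. cbv beta in Hlin.
  replace (fun _ : R => tau * 0 + 0 * 0) with (fun _ : R => 0) in Hlin
    by (apply functional_extensionality; intros; ring).
  replace (fun _ : R => tau * 1 + 0 * 0) with (fun _ : R => tau) in Hlin
    by (apply functional_extensionality; intros; ring).
  rewrite Hlin. ring.
Qed.

Lemma is_derive_j_vshift a b c rho : 0 < rho ->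
  (forall c', Rabs (c' - c) < rho -> inU h Rm a (fadd b (fun _ => c'))) ->
  is_derive (fun c' => j a (fadd b (fun _ => c'))) c
    (Dj a (fadd b (fun _ => c)) (fun _ => 0) (fun _ => 1)).
Proof.
  intros Hrho HU. apply is_derive_of_remainder. intros eps Heps.
  assert (HUc : inU h Rm a (fadd b (fun _ => c))) by (apply HU; rewrite Rminus_diag, Rabs_R0; lra).
  destruct (Dj_frechet a _ HUc eps Heps) as [d [Hd Hfr]].
  exists (Rmin d (rho / 2)). split; [apply Rmin_glb_lt; lra |]. intros tau Htau.
  pose proof (Rmin_l d (rho / 2)). pose proof (Rmin_r d (rho / 2)).
  specialize (Hfr (fun _ => 0) (fun _ => tau) (C1_const 0) (C1_const tau)).
  rewrite nrm1_const0, Dj_const_dir_scale in Hfr by assumption.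
  replace (fadd a (fun _ => 0)) with a in Hfr
    by (apply functional_extensionality; intros; unfold fadd; ring).
  replace (fadd (fadd b (fun _ => c)) (fun _ => tau)) with (fadd b (fun _ => c + tau)) in Hfr
    by (apply functional_extensionality; intros; unfold fadd; ring).
  apply Hfr; [lra | apply HU; replace (c + tau - c) with tau by ring; lra].
Qed.

Lemma j_vshift_lipschitz w0 v0 : inU h Rm w0 v0 -> exists L del, 0 < L /\ 0 < del /\
  forall a b m r, C1 a -> C1 b -> 0 <= m -> Rm + 2 * m < 0 -> 2 * r + m <= del ->
    (forall x, -h <= x <= 0 -> - m <= b x) ->
    (forall x, -h <= x <= 0 -> Rabs (a x - w0 x) <= r /\ Rabs (b x - v0 x) <= r /\
       Rabs (Derive a x - Derive w0 x) <= r /\ Rabs (Derive b x - Derive v0 x) <= r) ->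
    Rabs (j a (fadd b (fun _ => m)) - j a b) <= L * m.
Proof.
  intros HU0.
  destruct (Dj_continuous w0 v0 HU0 1 Rlt_0_1) as [del [Hdel Hcont]].
  set (D0 := Dj w0 v0 (fun _ => 0) (fun _ => 1)).
  exists (Rabs D0 + 1), del. split; [pose proof (Rabs_pos D0); lra | split; [exact Hdel |]].
  intros a b m r Ca Cb Hm HRm Hdel_rm Hbm Hclose.
  destruct HU0 as (Cw0 & Cv0 & _).
  set (rho := - Rm / 2 - m).
  assert (HUc : forall c, - rho < c -> inU h Rm a (fadd b (fun _ => c))).
  { intros c Hc. split; [exact Ca | split; [apply C1_fadd_const, Cb |]].
    intros x Hx. unfold fadd. specialize (Hbm x Hx). unfold rho in Hc. lra. }
  assert (Hbound : forall c, 0 <= c <= m ->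
    Rabs (Dj a (fadd b (fun _ => c)) (fun _ => 0) (fun _ => 1)) <= Rabs D0 + 1).
  { intros c Hc.
    assert (Hnear : nrm1 h (fsub a w0) (fsub (fadd b (fun _ => c)) v0) <= del).
    { eapply Rle_trans; [apply (nrm1_le h _ _ (r + c) r h_ge0) | lra].
      rewrite !Derive_fsub, Derive_fadd_const by auto using C1_fadd_const.
      intros x Hx. destruct (Hclose x Hx) as (H1 & H2 & H3 & H4). unfold fsub, fadd.
      apply Rabs_le_between in H1, H2. repeat split; auto; apply Rabs_le_between; lra. }
    specialize (Hcont _ _ (HUc c ltac:(unfold rho; lra)) Hnear _ _ (C1_const 0) (C1_const 1)).
    rewrite nrm1_const0, Rabs_R1 in Hcont by exact h_ge0. fold D0 in Hcont.
    apply Rabs_le_between' in Hcont. pose proof (Rle_abs D0). pose proof (Rabs_maj2 D0).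
    apply Rabs_le_between. lra. }
  assert (Hlip := MVT_abs_le (fun c => j a (fadd b (fun _ => c)))
    (fun c => Dj a (fadd b (fun _ => c)) (fun _ => 0) (fun _ => 1)) 0 m (Rabs D0 + 1) Hm).
  assert (Hb0 : fadd b (fun _ => 0) = b)
    by (apply functional_extensionality; intros; unfold fadd; ring).
  cbv beta in Hlip. rewrite Hb0, Rminus_0_r in Hlip. apply Hlip; [| exact Hbound].
  intros c Hc. apply (is_derive_j_vshift a b c rho); [unfold rho; lra |].
  intros c' Hc'. apply HUc. apply Rabs_lt_between' in Hc'. lra.
Qed.

End ConstantDirection.

Section Model.

Variables (h Rm : R) (q : R -> R) (mu : R) (j : (R -> R) -> (R -> R) -> R).
Hypothesis Hst : standing h Rm q mu j.

Lemma solution_v_gt_Rm w v : is_solution h Rm q mu j w v -> forall t, 0 <= t -> Rm < v t.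
Proof.
  intros (_ & _ & HU & _) t Ht. destruct (HU t Ht) as (_ & _ & Hv).
  specialize (Hv 0 ltac:(destruct Hst; lra)). unfold shift in Hv.
  rewrite Rplus_0_r in Hv. exact Hv.
Qed.

Lemma solution_w_nonneg w v : is_solution h Rm q mu j w v -> inXplus h q mu j w v ->
  forall t, 0 <= t -> 0 <= w t.
Proof.
  intros Sol ((_ & _ & Hinit) & _).
  pose proof Hst as (Hh & _ & _ & _ & _ & _ & _ & _ & (Q & HQ) & _).
  pose proof Sol as ((Cw & _) & _ & _ & Hode).
  apply (linear_ode_nonneg w (fun t => q (v t)) Q Cw).
  - intros t Ht. apply (Hode t Ht).
  - intros t Ht. apply HQ, (solution_v_gt_Rm w v Sol t Ht).
  - apply (Hinit 0). lra.
Qed.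

Lemma j_lower_bound_near w0 v0 : inU h Rm w0 v0 -> (forall x, -h <= x <= 0 -> 0 <= v0 x) ->
  exists L r, 0 < L /\ 0 < r /\ forall a b m, C1 a -> C1 b -> 0 <= m ->
    (forall x, -h <= x <= 0 -> 0 <= a x /\ - m <= b x) ->
    (forall x, -h <= x <= 0 -> Rabs (a x - w0 x) <= r /\ Rabs (b x - v0 x) <= r /\
       Rabs (Derive a x - Derive w0 x) <= r /\ Rabs (Derive b x - Derive v0 x) <= r) ->
    - (L * m) <= j a b.
Proof.
  intros HU0 Hv0.
  pose proof Hst as (Hh & HRm & _ & _ & (Dj & Hlin & _ & Hfr & Hop & _) & _ & Hjpos & _).
  destruct (j_vshift_lipschitz h Rm j Dj ltac:(lra) Hlin Hfr Hop _ _ HU0)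
    as (L & del & HL & Hdel & Hlip).
  pose proof (Rmin_l (del / 3) (- Rm / 4)). pose proof (Rmin_r (del / 3) (- Rm / 4)).
  set (r := Rmin (del / 3) (- Rm / 4)) in *.
  assert (Hr : 0 < r) by (apply Rmin_glb_lt; lra).
  exists L, r. split; [exact HL | split; [exact Hr |]].
  intros a b m Ca Cb Hm Hab Hclose.
  (* [b >= -r] by closeness to [v0 >= 0], so lifting [b] by [Rmin m r] lands in [U_+],
     where [j >= 0], and changes [j] by at most [L (Rmin m r)]. *)
  pose proof (Rmin_l m r). pose proof (Rmin_r m r).
  assert (Hm' : 0 <= Rmin m r) by (apply Rmin_glb; lra).
  set (m' := Rmin m r) in *.
  assert (Hbm : forall x, -h <= x <= 0 -> 0 <= a x /\ - m' <= b x).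
  { intros x Hx. destruct (Hab x Hx) as [Ha Hb]. destruct (Hclose x Hx) as (_ & Hc & _).
    apply Rabs_le_between' in Hc. specialize (Hv0 x Hx).
    split; [exact Ha |]. cut (- b x <= m'); [lra |]. apply Rmin_glb; lra. }
  assert (Hlift : 0 <= j a (fadd b (fun _ => m'))).
  { apply Hjpos. split; [exact Ca | split; [apply C1_fadd_const, Cb |]].
    intros x Hx. specialize (Hbm x Hx). unfold fadd. lra. }
  assert (Hdiff : Rabs (j a (fadd b (fun _ => m')) - j a b) <= L * m').
  { apply (Hlip _ _ m' r); auto; try lra. intros x Hx. apply Hbm, Hx. }
  apply Rabs_le_between in Hdiff. nra.
Qed.

Lemma solution_j_lower_bound w v T :
  is_solution h Rm q mu j w v -> inXplus h q mu j w v -> 0 <= T ->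
  (forall s, -h <= s <= T -> 0 <= v s) ->
  exists L eta, 0 < L /\ 0 < eta /\ forall t m, T <= t <= T + eta -> 0 <= m ->
    (forall s, T <= s <= t -> - m <= v s) -> - (L * m) <= j (shift w t) (shift v t).
Proof.
  intros Sol Xp HT0 Hv_past. pose proof Hst as (Hh & _).
  pose proof Sol as (Cw & Cv & HU & _).
  pose proof Xp as ((_ & _ & Hinit) & _).
  destruct (j_lower_bound_near _ _ (HU T HT0)) as (L & r & HL & Hr & Hjge).
  { intros x Hx. apply Hv_past. lra. }
  destruct (shift_C1_close h w T r ltac:(lra) Cw Hr) as (ew & Hew & Hcw).
  destruct (shift_C1_close h v T r ltac:(lra) Cv Hr) as (ev & Hev & Hcv).
  exists L, (Rmin ew ev). split; [exact HL | split; [apply Rmin_glb_lt; assumption |]].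
  intros t m Ht Hm Hvm. pose proof (Rmin_l ew ev). pose proof (Rmin_r ew ev).
  apply Hjge; auto using C1_shift.
  - intros x Hx. unfold shift. split.
    + destruct (Rle_or_lt 0 (t + x));
        [apply (solution_w_nonneg w v Sol Xp); lra | apply (Hinit (t + x)); lra].
    + destruct (Rle_or_lt (t + x) T);
        [specialize (Hv_past (t + x) ltac:(lra)) | specialize (Hvm (t + x) ltac:(lra))]; lra.
  - rewrite !Derive_shift by assumption. unfold shift.
    intros x Hx. destruct (Hcw t ltac:(lra) x Hx), (Hcv t ltac:(lra) x Hx). auto.
Qed.

Lemma solution_v_nonneg w v : is_solution h Rm q mu j w v -> inXplus h q mu j w v ->
  forall t, 0 <= t -> 0 <= v t.
Proof.
  intros Sol Xp t1 Ht1.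
  pose proof Hst as (Hh & _ & Hmu & _).
  pose proof Sol as (_ & Cv & _ & Hode).
  pose proof Xp as ((_ & _ & Hinit) & _).
  apply Rnot_lt_le. intros Hneg.
  destruct (first_exit_time v t1 (continuous_of_C1 v Cv) (proj2 (Hinit 0 ltac:(lra))) Ht1 Hneg)
    as (T & HT0 & HvT & Hexit).
  assert (Hv_past : forall s, -h <= s <= T -> 0 <= v s).
  { intros s Hs. destruct (Rle_or_lt 0 s); [apply HvT; lra | apply (Hinit s); lra]. }
  destruct (solution_j_lower_bound w v T Sol Xp HT0 Hv_past) as (L & eta & HL & Heta & Hjlow).
  assert (HL2 : 0 < / (2 * L)) by (apply Rinv_0_lt_compat; lra).
  destruct (Hexit (Rmin eta (/ (2 * L)))) as (t3 & Ht3 & Hvt3); [apply Rmin_glb_lt; lra |].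
  pose proof (Rmin_l eta (/ (2 * L))). pose proof (Rmin_r eta (/ (2 * L))).
  destruct (continuity_ab_maj (fun t => - v t) T t3) as (t2 & Hmax & Ht2); [lra | |].
  { intros c _. apply continuity_pt_filterlim, (continuous_opp v), (continuous_of_C1 v Cv). }
  set (m := - v t2).
  assert (Hm : 0 < m) by (specialize (Hmax t3 ltac:(lra)); unfold m; lra).
  assert (HTt2 : T < t2).
  { destruct (Rle_lt_or_eq_dec T t2 (proj1 Ht2)) as [| <-]; [assumption |].
    specialize (HvT T ltac:(lra)). unfold m in Hm. lra. }
  assert (Hj : forall t, T <= t <= t2 -> - (L * m) <= j (shift w t) (shift v t)).
  { intros t Ht. apply Hjlow; [lra | lra |].
    intros s Hs. specialize (Hmax s ltac:(lra)). unfold m. lra. }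
  assert (Hdip : m <= L * m * (t2 - T)).
  { apply (linear_comparison_lower v T t2 (L * m) mu Hmu); [lra | nra | apply HvT; lra | |].
    - intros t Ht. apply Cv.
    - intros t Ht. rewrite (proj2 (Hode t ltac:(lra))). specialize (Hj t Ht). lra. }
  assert (Hshort : L * (t2 - T) <= / 2).
  { replace (/ 2) with (L * / (2 * L)) by (field; lra). apply Rmult_le_compat_l; lra. }
  nra.
Qed.

Hypothesis j_small : forall eps, 0 < eps -> exists del, 0 < del /\
  forall w v, inUplus h w v -> sup0 h w <= del -> j w v <= eps.
Hypothesis q0_neg : q 0 < 0.

Section Solution.

Variables w v : R -> R.
Hypothesis Hsol : is_solution h Rm q mu j w v.
Hypothesis Hinit : inXplus h q mu j w v.

Lemma solution_nonneg t : -h <= t -> 0 <= w t /\ 0 <= v t.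
Proof.
  intros Ht. destruct (Rle_or_lt 0 t).
  - split; [apply (solution_w_nonneg w v) | apply (solution_v_nonneg w v)]; assumption.
  - destruct Hinit as ((_ & _ & Hpos) & _). apply Hpos. lra.
Qed.

Lemma solution_Uplus t : 0 <= t -> inUplus h (shift w t) (shift v t).
Proof.
  intros Ht. destruct Hsol as (Cw & Cv & _).
  split; [apply C1_shift, Cw | split; [apply C1_shift, Cv |]].
  intros s Hs. apply solution_nonneg. lra.
Qed.

Lemma solution_w_noninc a b : 0 <= a <= b -> w b <= w a.
Proof.
  intros Hab. pose proof Hst as (Hh & _ & _ & _ & _ & _ & _ & _ & _ & _ & Hqneg).
  destruct Hsol as ((Cw & _) & _ & _ & Hode).
  assert (w b - w a <= 0 * (b - a)); [| lra].
  apply (MVT_le w (Derive w)); [lra | intros x Hx; apply Derive_correct, Cw |].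
  intros x Hx. rewrite (proj1 (Hode x ltac:(lra))).
  destruct (solution_nonneg x ltac:(lra)) as [Hw [Hv | Hv]].
  - specialize (Hqneg _ Hv). nra.
  - rewrite <- Hv. nra.
Qed.

Lemma solution_w_le_sup0 t : -h <= t -> w t <= sup0 h w.
Proof.
  intros Ht. pose proof Hst as (Hh & _). destruct Hsol as (Cw & _).
  destruct (Rle_or_lt t 0).
  - apply (C1_le_sup0 h); auto; lra.
  - apply Rle_trans with (w 0); [apply solution_w_noninc; lra | apply (C1_le_sup0 h); auto; lra].
Qed.

Lemma solution_sup0_shift_w t : 0 <= t -> sup0 h (shift w t) <= sup0 h w.
Proof.
  intros Ht. pose proof Hst as (Hh & _).
  apply sup0_le; [lra |]. intros s Hs. unfold shift.
  rewrite Rabs_pos_eq by (apply solution_nonneg; lra). apply solution_w_le_sup0. lra.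
Qed.

Lemma solution_v_le_max J : (forall t, 0 <= t -> j (shift w t) (shift v t) <= J) ->
  forall t, -h <= t -> v t <= Rmax (sup0 h v) (J / mu).
Proof.
  intros HJ t Ht. pose proof Hst as (Hh & _ & Hmu & _).
  destruct Hsol as (_ & Cv & _ & Hode).
  destruct (Rle_or_lt t 0).
  - eapply Rle_trans; [apply (C1_le_sup0 h); auto; lra | apply Rmax_l].
  - eapply Rle_trans; [apply (linear_comparison_max v 0 t J mu); auto; try lra |].
    + intros s Hs. apply Cv.
    + intros s Hs. rewrite (proj2 (Hode s ltac:(lra))). specialize (HJ s ltac:(lra)). lra.
    + apply Rmax_lub; [| apply Rmax_r].
      eapply Rle_trans; [apply (C1_le_sup0 h); auto; lra | apply Rmax_l].
Qed.

Lemma solution_stays_small e d :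
  (forall w' v', inUplus h w' v' -> sup0 h w' <= d -> j w' v' <= mu * e) ->
  sup0 h w <= Rmin e d -> sup0 h v <= e ->
  forall t, -h <= t -> 0 <= w t <= e /\ 0 <= v t <= e /\
    (0 <= t -> j (shift w t) (shift v t) <= mu * e).
Proof.
  intros Hjd Hw Hv. pose proof Hst as (Hh & _ & Hmu & _).
  pose proof (Rmin_l e d). pose proof (Rmin_r e d).
  assert (Hj : forall t, 0 <= t -> j (shift w t) (shift v t) <= mu * e).
  { intros t Ht. apply Hjd; [apply solution_Uplus, Ht |].
    pose proof (solution_sup0_shift_w t Ht). lra. }
  intros t Ht. destruct (solution_nonneg t Ht).
  pose proof (solution_w_le_sup0 t Ht). pose proof (solution_v_le_max _ Hj t Ht) as Hvt.
  replace (mu * e / mu) with e in Hvt by (field; lra).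
  rewrite Rmax_right in Hvt by exact Hv.
  repeat split; auto; lra.
Qed.

Lemma solution_Derive_w_le Q : (forall s, Rm < s -> Rabs (q s) <= Q) ->
  forall t, 0 <= t -> Rabs (Derive w t) <= Q * w t.
Proof.
  intros HQ t Ht. pose proof Hst as (Hh & _). destruct Hsol as (_ & _ & _ & Hode).
  destruct (solution_nonneg t ltac:(lra)) as [Hw _].
  rewrite (proj1 (Hode t Ht)), Rabs_mult, (Rabs_pos_eq (w t)) by exact Hw.
  apply Rmult_le_compat_r; [exact Hw | apply HQ, (solution_v_gt_Rm w v Hsol t Ht)].
Qed.

Lemma solution_Derive_v_le t : 0 <= t ->
  Rabs (Derive v t) <= Rmax (j (shift w t) (shift v t)) (mu * v t).
Proof.
  intros Ht. pose proof Hst as (Hh & _ & Hmu & _ & _ & _ & Hjpos & _).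
  destruct Hsol as (_ & _ & _ & Hode). rewrite (proj2 (Hode t Ht)).
  pose proof (Hjpos _ _ (solution_Uplus t Ht)). destruct (solution_nonneg t ltac:(lra)) as [_ Hv].
  pose proof (Rmax_l (j (shift w t) (shift v t)) (mu * v t)).
  pose proof (Rmax_r (j (shift w t) (shift v t)) (mu * v t)).
  apply Rabs_le_between. split; nra.
Qed.

Lemma solution_j_bounded : exists M, forall t, 0 <= t -> j (shift w t) (shift v t) <= M.
Proof.
  pose proof Hst as (Hh & HRm & _ & _ & _ & _ & _ & Hjbd & (Q & HQ) & _).
  pose proof Hsol as (Cw & Cv & _).
  assert (HQ0 : 0 <= Q) by (pose proof (HQ 0 HRm); pose proof (Rabs_pos (q 0)); lra).
  destruct (Hjbd (fun f => exists t, 0 <= t /\ f = shift w t)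
                 (fun g => exists t, 0 <= t /\ g = shift v t)) as [M HM].
  - intros f g [t1 [Ht1 ->]] [t2 [Ht2 ->]]. apply solution_Uplus in Ht1 as (Cw1 & _ & H1).
    apply solution_Uplus in Ht2 as (_ & Cv2 & H2).
    split; [exact Cw1 | split; [exact Cv2 |]]. intros s Hs. split; [apply H1 | apply H2]; auto.
  - exists (sup0 h w + Rmax (sup0 h (Derive w)) (Q * sup0 h w)).
    intros f [t [Ht ->]]. rewrite Derive_shift by exact Cw.
    apply Rplus_le_compat; apply sup0_le; try lra; intros s Hs; unfold shift.
    + rewrite Rabs_pos_eq by (apply solution_nonneg; lra). apply solution_w_le_sup0. lra.
    + destruct (Rle_or_lt (t + s) 0).
      * eapply Rle_trans; [apply (Rabs_le_sup0 h); [lra | intros; apply Cw | lra] | apply Rmax_l].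
      * eapply Rle_trans; [apply (solution_Derive_w_le Q HQ); lra |].
        eapply Rle_trans; [| apply Rmax_r].
        apply Rmult_le_compat_l; [exact HQ0 | apply solution_w_le_sup0; lra].
  - exists M. intros t Ht. eapply Rle_trans; [apply Rle_abs | apply HM; exists t; auto].
Qed.

Lemma solution_w_exp_decay : exists c, 0 < c /\ forall t, 0 <= t -> w t <= w 0 * exp (- c * t).
Proof.
  pose proof Hst as (Hh & HRm & Hmu & _ & _ & _ & _ & _ & _ & Hqd & Hqneg).
  pose proof Hsol as ((Cw & _) & _ & _ & Hode).
  destruct solution_j_bounded as [M HM].
  set (K := Rmax (sup0 h v) (M / mu)).
  assert (HvK : forall t, 0 <= t -> 0 <= v t <= K).
  { intros t Ht. split; [apply solution_nonneg; lra | apply (solution_v_le_max M HM); lra]. }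
  (* [q] attains a negative maximum on the range [0, K] of [v] *)
  destruct (continuity_ab_maj q 0 K) as [x0 [Hx0 Hx0K]].
  - specialize (HvK 0 ltac:(lra)). lra.
  - intros c Hc. apply continuity_pt_filterlim, (@ex_derive_continuous R_AbsRing R_NormedModule).
    apply Hqd. lra.
  - exists (- q x0). split.
    + destruct (proj1 Hx0K) as [Hpos | <-]; [specialize (Hqneg x0 Hpos) |]; lra.
    + intros t Ht. pose proof (linear_comparison w 0 t 0 (- q x0)) as Hcmp.
      replace (0 / - q x0) with 0 in Hcmp
        by (destruct (proj1 Hx0K) as [Hpos | <-]; [specialize (Hqneg x0 Hpos) |]; field; lra).
      rewrite Rminus_0_r, Rplus_0_l, Rminus_0_r in Hcmp. apply Hcmp; try lra.
      * destruct (proj1 Hx0K) as [Hpos | <-]; [specialize (Hqneg x0 Hpos) |]; lra.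
      * intros s Hs. apply Cw.
      * intros s Hs. rewrite (proj1 (Hode s ltac:(lra))).
        specialize (Hx0 (v s) (HvK s ltac:(lra))). destruct (solution_nonneg s ltac:(lra)). nra.
Qed.

Lemma solution_w_eventually_le d : 0 < d -> exists T, 0 <= T /\ forall t, T <= t -> w t <= d.
Proof.
  intros Hd. destruct solution_w_exp_decay as (c & Hc & Hdecay).
  destruct (exp_decay_eventually_le (w 0) c d Hc Hd) as [S HS].
  exists (Rmax 0 S). split; [apply Rmax_l |]. intros t Ht.
  pose proof (Rmax_l 0 S). pose proof (Rmax_r 0 S).
  eapply Rle_trans; [apply Hdecay; lra | apply HS; lra].
Qed.

Lemma solution_eventually_small e : 0 < e -> exists T, forall t, T <= t ->
  w t <= e /\ v t <= e /\ j (shift w t) (shift v t) <= mu * e.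
Proof.
  intros He. pose proof Hst as (Hh & _ & Hmu & _).
  pose proof Hsol as (_ & (Cv & _) & _ & Hode).
  destruct (j_small (mu * (e / 2))) as [d [Hd Hjd]]; [nra |].
  destruct (solution_w_eventually_le (Rmin d e)) as [T1 [HT1 Hw]]; [apply Rmin_glb_lt; lra |].
  pose proof (Rmin_l d e). pose proof (Rmin_r d e).
  set (T2 := T1 + h).
  assert (Hj : forall t, T2 <= t -> j (shift w t) (shift v t) <= mu * (e / 2)).
  { intros t Ht. apply Hjd; [apply solution_Uplus; unfold T2 in Ht; lra |].
    apply sup0_le; [lra |]. intros s Hs. unfold shift.
    rewrite Rabs_pos_eq by (apply solution_nonneg; unfold T2 in Ht; lra).
    specialize (Hw (t + s) ltac:(unfold T2 in Ht; lra)). lra. }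
  destruct (exp_decay_eventually_le (v T2 - e / 2) mu (e / 2) Hmu ltac:(lra)) as [S HS].
  exists (T2 + Rmax 0 S). intros t Ht. pose proof (Rmax_l 0 S). pose proof (Rmax_r 0 S).
  split; [specialize (Hw t ltac:(unfold T2 in *; lra)); lra |].
  split; [| specialize (Hj t ltac:(lra)); nra].
  pose proof (linear_comparison v T2 t (mu * (e / 2)) mu Hmu ltac:(lra)) as Hcmp.
  replace (mu * (e / 2) / mu) with (e / 2) in Hcmp by (field; lra).
  specialize (HS (t - T2) ltac:(lra)).
  enough (v t <= e / 2 + (v T2 - e / 2) * exp (- mu * (t - T2))) by lra.
  apply Hcmp; [intros s Hs; apply Cv |].
  intros s Hs. rewrite (proj2 (Hode s ltac:(unfold T2 in *; lra))).
  specialize (Hj s ltac:(lra)). lra.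
Qed.

Lemma solution_attractive_C1 eps : 0 < eps ->
  exists T, forall t, T <= t -> nrm1 h (shift w t) (shift v t) <= eps.
Proof.
  intros Heps. pose proof Hst as (Hh & HRm & Hmu & _ & _ & _ & _ & _ & (Q & HQ) & _).
  pose proof Hsol as (Cw & Cv & _).
  assert (HQ0 : 0 <= Q) by (pose proof (HQ 0 HRm); pose proof (Rabs_pos (q 0)); lra).
  set (e := eps / (1 + Q + mu)).
  assert (He : 0 < e) by (apply Rdiv_lt_0_compat; lra).
  destruct (solution_eventually_small e He) as [T HT].
  exists (Rmax 0 T + h). intros t Ht. pose proof (Rmax_l 0 T). pose proof (Rmax_r 0 T).
  replace eps with (e + (Q + mu) * e) by (unfold e; field; lra).
  apply nrm1_le; [lra |]. rewrite !Derive_shift by assumption. unfold shift. intros s Hs.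
  destruct (HT (t + s) ltac:(lra)) as (Hw & Hv & Hj).
  destruct (solution_nonneg (t + s) ltac:(lra)).
  rewrite !Rabs_pos_eq by lra. repeat split; try lra.
  - eapply Rle_trans; [apply (solution_Derive_w_le Q HQ); lra | nra].
  - eapply Rle_trans; [apply solution_Derive_v_le; lra | apply Rmax_lub; nra].
Qed.

End Solution.

Lemma zero_equilibrium : inXplus h q mu j (fun _ => 0) (fun _ => 0) /\
  is_solution h Rm q mu j (fun _ => 0) (fun _ => 0).
Proof.
  pose proof Hst as (Hh & HRm & Hmu & _ & _ & _ & Hjpos & _).
  assert (H0 : inUplus h (fun _ => 0) (fun _ => 0)).
  { split; [apply C1_const | split; [apply C1_const | intros; lra]]. }
  assert (Hj0 : j (fun _ => 0) (fun _ => 0) = 0).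
  { apply Rle_antisym; [| apply Hjpos, H0]. apply Rnot_lt_le. intros Hpos.
    destruct (j_small (j (fun _ => 0) (fun _ => 0) / 2)) as [d [Hd Hle]]; [lra |].
    specialize (Hle _ _ H0). rewrite sup0_const, Rabs_R0 in Hle by lra.
    specialize (Hle ltac:(lra)). lra. }
  split; [split; [exact H0 | rewrite !Derive_const, Hj0; split; ring] |].
  split; [apply C1_const | split; [apply C1_const | split]]; intros t Ht; unfold shift; cbv beta.
  - split; [apply C1_const | split; [apply C1_const | intros; lra]].
  - rewrite !Derive_const, Hj0. split; ring.
Qed.

Lemma zero_stable_C0 eps : 0 < eps -> exists del, 0 < del /\
  forall w v, is_solution h Rm q mu j w v -> inXplus h q mu j w v ->
    nrm0 h w v <= del -> forall t, 0 <= t -> nrm0 h (shift w t) (shift v t) <= eps.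
Proof.
  intros Heps. pose proof Hst as (Hh & _ & Hmu & _).
  destruct (j_small (mu * eps)) as [d [Hd Hjd]]; [nra |].
  exists (Rmin eps d). split; [apply Rmin_glb_lt; lra |].
  intros w v Sol Xp Hn t Ht. unfold nrm0 in Hn.
  pose proof (Rmin_l eps d). pose proof (Rmax_l (sup0 h w) (sup0 h v)).
  pose proof (Rmax_r (sup0 h w) (sup0 h v)).
  pose proof (solution_stays_small w v Sol Xp eps d Hjd ltac:(lra) ltac:(lra)) as Hsmall.
  apply nrm0_le; [lra |]. intros s Hs. unfold shift.
  destruct (Hsmall (t + s) ltac:(lra)) as (Hw & Hv & _).
  rewrite !Rabs_pos_eq by lra. lra.
Qed.

Lemma zero_stable_C1 eps : 0 < eps -> exists del, 0 < del /\
  forall w v, is_solution h Rm q mu j w v -> inXplus h q mu j w v ->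
    nrm1 h w v <= del -> forall t, 0 <= t -> nrm1 h (shift w t) (shift v t) <= eps.
Proof.
  intros Heps. pose proof Hst as (Hh & HRm & Hmu & _ & _ & _ & _ & _ & (Q & HQ) & _).
  assert (HQ0 : 0 <= Q) by (pose proof (HQ 0 HRm); pose proof (Rabs_pos (q 0)); lra).
  set (e := eps / (2 + Q + mu)).
  assert (He : 0 < e) by (apply Rdiv_lt_0_compat; lra).
  destruct (j_small (mu * e)) as [d [Hd Hjd]]; [nra |].
  exists (Rmin e d). split; [apply Rmin_glb_lt; lra |].
  intros w v Sol Xp Hn t Ht. pose proof Sol as (Cw & Cv & _).
  pose proof (Rle_trans _ _ _ (nrm0_le_nrm1 h w v ltac:(lra)) Hn) as Hn0. unfold nrm0 in Hn0.
  pose proof (Rmin_l e d). pose proof (Rmax_l (sup0 h w) (sup0 h v)).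
  pose proof (Rmax_r (sup0 h w) (sup0 h v)).
  pose proof (solution_stays_small w v Sol Xp e d Hjd ltac:(lra) ltac:(lra)) as Hsmall.
  replace eps with (e + (1 + Q + mu) * e) by (unfold e; field; lra).
  apply nrm1_le; [lra |]. rewrite !Derive_shift by assumption. unfold shift. intros s Hs.
  destruct (Hsmall (t + s) ltac:(lra)) as (Hw & Hv & Hj).
  rewrite (Rabs_pos_eq (w _)), (Rabs_pos_eq (v _)) by lra.
  destruct (Rle_or_lt (t + s) 0).
  - destruct (Rabs_le_nrm1 h w v ltac:(lra) Cw Cv (t + s) ltac:(lra)) as (_ & _ & Hw' & Hv').
    repeat split; nra.
  - repeat split; try lra.
    + eapply Rle_trans; [apply (solution_Derive_w_le w v Sol Xp Q HQ); lra | nra].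
    + specialize (Hj ltac:(lra)).
      eapply Rle_trans; [apply (solution_Derive_v_le w v Sol Xp); lra | apply Rmax_lub; nra].
Qed.

End Model.

Theorem corollary2 (h Rm : R) (q : R -> R) (mu : R)
    (j : (R -> R) -> (R -> R) -> R) :
  standing h Rm q mu j ->
  (forall eps, 0 < eps -> exists del, 0 < del /\
     forall w v, inUplus h w v -> sup0 h w <= del -> j w v <= eps) ->
  q 0 < 0 ->
  (* zero is an equilibrium in X_+ *)
  (inXplus h q mu j (fun _ => 0) (fun _ => 0) /\
   is_solution h Rm q mu j (fun _ => 0) (fun _ => 0)) /\
  (* stability in the C-norm *)
  (forall eps, 0 < eps -> exists del, 0 < del /\
     forall w v, is_solution h Rm q mu j w v -> inXplus h q mu j w v ->
       nrm0 h w v <= del ->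
       forall t, 0 <= t -> nrm0 h (shift w t) (shift v t) <= eps) /\
  (* stability in the C^1-norm *)
  (forall eps, 0 < eps -> exists del, 0 < del /\
     forall w v, is_solution h Rm q mu j w v -> inXplus h q mu j w v ->
       nrm1 h w v <= del ->
       forall t, 0 <= t -> nrm1 h (shift w t) (shift v t) <= eps) /\
  (* global attractivity on X_+ in the C- and C^1-norms *)
  (forall w v, is_solution h Rm q mu j w v -> inXplus h q mu j w v ->
     (forall eps, 0 < eps -> exists T, forall t, T <= t ->
        nrm0 h (shift w t) (shift v t) <= eps) /\
     (forall eps, 0 < eps -> exists T, forall t, T <= t ->
        nrm1 h (shift w t) (shift v t) <= eps)).
Proof.
  intros Hst Hsmall Hq0.
  split; [exact (zero_equilibrium h Rm q mu j Hst Hsmall) |].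
  split; [exact (zero_stable_C0 h Rm q mu j Hst Hsmall Hq0) |].
  split; [exact (zero_stable_C1 h Rm q mu j Hst Hsmall Hq0) |].
  intros w v Sol Xp.
  pose proof (solution_attractive_C1 h Rm q mu j Hst Hsmall Hq0 w v Sol Xp) as Hattr.
  split; [| exact Hattr].
  intros eps Heps. destruct (Hattr eps Heps) as [T HT]. exists T. intros t Ht.
  destruct Hst as (Hh & _).
  eapply Rle_trans; [apply nrm0_le_nrm1; lra | apply HT, Ht].
Qed.
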